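(* Let $\{s_1,\dots,s_n\}\subset\mathbb{S}^{d-1}$ be $\eta$-dense with $\eta\le1/8$, and let $A\in\mathbb{R}^{n\times d}$ have rows $a_1,\dots,a_n$ with $\|a_i-s_i\|\le\eta$ for every $i\in[n]$. For every $b\in[1-\eta,1+\eta]^n$, \[ (1-2\eta)\mathbb{B}_2^d\subseteq\{x\in\mathbb{R}^d:Ax\le b\}\subseteq(1+4\eta)\mathbb{B}_2^d. \]
   Context: A set $S\subset\mathbb{S}^{d-1}$ is $\eta$-dense if for every $x\in\mathbb{S}^{d-1}$ there is $s\in S$ with $\|x-s\|\le\eta$. $\mathbb{B}_2^d$ is the closed Euclidean unit ball. *)

From HB Require Import structures.
From mathcomp Require Import all_boot all_order all_algebra.
From mathcomp Require Import reals.
Set Implicit Arguments. Unset Strict Implicit. Unset Printing Implicit Defensive.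
Import Order.TTheory GRing.Theory Num.Theory.
Local Open Scope ring_scope.

Definition enorm (R : realType) (d : nat) (x : 'rV[R]_d) : R :=
  Num.sqrt (\sum_(j < d) x 0 j ^+ 2).

Definition on_sphere (R : realType) (d : nat) (x : 'rV[R]_d) : Prop :=
  enorm x = 1.

Definition eta_dense (R : realType) (d n : nat) (s : 'I_n -> 'rV[R]_d) (eta : R) : Prop :=
  forall x : 'rV[R]_d, on_sphere x -> exists i : 'I_n, enorm (x - s i) <= eta.

Definition in_scaled_ball (R : realType) (d : nat) (r : R) (x : 'rV[R]_d) : Prop :=
  exists y : 'rV[R]_d, enorm y <= 1 /\ x = r *: y.

Definition in_polyhedron (R : realType) (n d : nat) (A : 'M[R]_(n, d)) (b : 'cV[R]_n)
  (x : 'rV[R]_d) : Prop :=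
  forall i : 'I_n, (A *m x^T) i 0 <= b i 0.

(** Writing [a_i = s_i + (a_i - s_i)], every row has norm at most [1 + eta],
    so by Cauchy-Schwarz [a_i . x <= (1 + eta)(1 - 2 eta) <= 1 - eta <= b_i]
    on the ball of radius [1 - 2 eta].  Conversely, if [x = r u] with [u] a
    unit vector, density gives an [i] with [|u - a_i| <= 2 eta], hence
    [a_i . u >= 1 - 2 eta] and [r (1 - 2 eta) <= a_i . x <= 1 + eta]; for
    [eta <= 1/8] this forces [r <= 1 + 4 eta]. *)
From HB Require Import structures.
From mathcomp Require Import all_boot all_order all_algebra.
From mathcomp Require Import reals.
From mathcomp Require Import lra.
Import Order.TTheory GRing.Theory Num.Theory.
Local Open Scope ring_scope.

Section DotProduct.
Context {R : comPzRingType} {d : nat}.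
Implicit Types (u v x : 'rV[R]_d) (c : R).

Definition dot u v : R := (u *m v^T) 0 0.

Lemma dotE u v : dot u v = \sum_j u 0 j * v 0 j.
Proof. by rewrite /dot mxE; apply: eq_bigr => j _; rewrite mxE. Qed.

Lemma dotC u v : dot u v = dot v u.
Proof. by rewrite !dotE; apply: eq_bigr => j _; rewrite mulrC. Qed.

Lemma dotDl u v x : dot (u + v) x = dot u x + dot v x.
Proof. by rewrite /dot mulmxDl mxE. Qed.

Lemma dotBl u v x : dot (u - v) x = dot u x - dot v x.
Proof. by rewrite /dot mulmxBl !mxE. Qed.

Lemma dotZl c u x : dot (c *: u) x = c * dot u x.
Proof. by rewrite /dot -scalemxAl mxE. Qed.

Lemma dotZr c u x : dot u (c *: x) = c * dot u x.
Proof. by rewrite dotC dotZl dotC. Qed.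

Lemma mulmx_tr_row n (A : 'M[R]_(n, d)) i x : (A *m x^T) i 0 = dot (row i A) x.
Proof. by rewrite /dot -row_mul [RHS]mxE. Qed.

End DotProduct.

Section EuclideanNorm.
Context {R : realType} {d : nat}.
Implicit Types (u v x : 'rV[R]_d) (c r : R).

Lemma enorm_ge0 x : 0 <= enorm x.
Proof. exact: sqrtr_ge0. Qed.

Lemma enorm_sqr x : enorm x ^+ 2 = dot x x.
Proof.
rewrite sqr_sqrtr ?dotE; last by apply: sumr_ge0 => j _; apply: sqr_ge0.
by apply: eq_bigr => j _; rewrite expr2.
Qed.

Lemma enorm_eq0 x : (enorm x == 0) = (x == 0).
Proof.
apply/eqP/eqP => [x0|->]; last first.
  by rewrite /enorm big1 ?sqrtr0 // => j _; rewrite mxE expr0n.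
have : \sum_j x 0 j ^+ 2 = 0.
  rewrite -[LHS]sqr_sqrtr -/(enorm x) ?x0 ?expr0n //.
  by apply: sumr_ge0 => j _; apply: sqr_ge0.
move/(psumr_eq0P (fun j _ => sqr_ge0 (x 0 j))) => xj0.
by apply/rowP => j; rewrite mxE; apply/eqP; rewrite -sqrf_eq0 xj0.
Qed.

Lemma enormZ c x : enorm (c *: x) = `|c| * enorm x.
Proof.
rewrite /enorm (eq_bigr (fun j => c ^+ 2 * x 0 j ^+ 2)) => [|j _]; last first.
  by rewrite mxE exprMn.
by rewrite -mulr_sumr sqrtrM ?sqr_ge0 // sqrtr_sqr.
Qed.

Lemma enorm_distC u v : enorm (u - v) = enorm (v - u).
Proof. by rewrite -opprB -scaleN1r enormZ normrN normr1 mul1r. Qed.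

(* Expand [0 <= |b u - a v|^2] with [a = |u|], [b = |v|]. *)
Lemma dot_le_enorm u v : dot u v <= enorm u * enorm v.
Proof.
have [->|u0] := eqVneq u 0; first by rewrite /dot mul0mx mxE mulr_ge0 ?enorm_ge0.
have [->|v0] := eqVneq v 0.
  by rewrite /dot trmx0 mulmx0 mxE mulr_ge0 ?enorm_ge0.
set a := enorm u; set b := enorm v.
have ab_gt0 : 0 < a * b by rewrite mulr_gt0 // lt0r enorm_eq0 ?u0 ?v0 enorm_ge0.
have : 0 <= enorm (b *: u - a *: v) ^+ 2 by apply: sqr_ge0.
rewrite enorm_sqr !(dotBl, dotZl) ![dot _ (_ - _)]dotC !(dotBl, dotZl).
rewrite -!enorm_sqr -/a -/b (dotC v u) => sq_ge0.
rewrite -(ler_pM2l ab_gt0); nra.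
Qed.

Lemma enormD u v : enorm (u + v) <= enorm u + enorm v.
Proof.
rewrite -(ler_pXn2r (_ : 0 < 2)%N) ?nnegrE ?addr_ge0 ?enorm_ge0 //.
rewrite enorm_sqr !dotDl ![dot _ (_ + _)]dotC !dotDl -!enorm_sqr (dotC v u).
have := dot_le_enorm u v; lra.
Qed.

Lemma in_scaled_ballP r x : 0 < r -> in_scaled_ball r x <-> enorm x <= r.
Proof.
move=> r_gt0; split=> [[y [y_le1 ->]]|x_le].
  by rewrite enormZ gtr0_norm // ler_piMr // ltW.
exists (r^-1 *: x); split; last by rewrite scalerA divff ?scale1r // gt_eqF.
by rewrite enormZ gtr0_norm ?invr_gt0 // ler_pdivrMl // mulr1.
Qed.

Lemma dot_ge_near_unit u a : enorm u = 1 -> 1 - enorm (u - a) <= dot a u.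
Proof.
move=> u1; have := dot_le_enorm (u - a) u.
by rewrite dotBl -enorm_sqr u1 expr1n mulr1; lra.
Qed.

End EuclideanNorm.

Section PolyhedronBetweenBalls.
Context {R : realType} {n d : nat} {A : 'M[R]_(n, d)} {b : 'cV[R]_n} {eta : R}.

Lemma ball_sub_polyhedron :
  (forall i, enorm (row i A) <= 1 + eta) -> (forall i, 1 - eta <= b i 0) ->
  forall x, enorm x <= 1 - 2 * eta -> in_polyhedron A b x.
Proof.
move=> rowA_le b_ge x x_le i; rewrite mulmx_tr_row.
apply: le_trans (dot_le_enorm _ _) _.
have := enorm_ge0 (row i A); have := enorm_ge0 x; have := rowA_le i; have := b_ge i.
nra.
Qed.

Lemma dense_rows_dot_ge {s : 'I_n -> 'rV[R]_d} :
  eta_dense s eta -> (forall i, enorm (row i A - s i) <= eta) ->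
  forall u, enorm u = 1 -> exists i, 1 - 2 * eta <= dot (row i A) u.
Proof.
move=> dense rowA_near u u1; have [i u_near] := dense u u1; exists i.
apply: le_trans (dot_ge_near_unit _ _ u1).
have : enorm (u - row i A) <= enorm (u - s i) + enorm (s i - row i A).
  by rewrite -[u - row i A](subrKA (s i)); apply: enormD.
rewrite enorm_distC (enorm_distC (s i)); have := rowA_near i; lra.
Qed.

Lemma polyhedron_sub_ball :
  0 <= eta -> eta <= 1 / 8 ->
  (forall u, enorm u = 1 -> exists i, 1 - 2 * eta <= dot (row i A) u) ->
  (forall i, b i 0 <= 1 + eta) ->
  forall x, in_polyhedron A b x -> enorm x <= 1 + 4 * eta.
Proof.
move=> eta_ge0 eta_le covered b_le x x_in; set r := enorm x.
have [//|r_big] := lerP r (1 + 4 * eta).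
have r_gt0 : 0 < r by apply: le_lt_trans r_big; lra.
set u := r^-1 *: x.
have u1 : enorm u = 1 by rewrite enormZ gtr0_norm ?invr_gt0 // mulVf ?gt_eqF.
have [i dot_ge] := covered u u1.
have : dot (row i A) x <= 1 + eta.
  by rewrite -mulmx_tr_row; apply: le_trans (x_in i) (b_le i).
rewrite -[x](scalerKV (lt0r_neq0 r_gt0)) -/u dotZr.
nra.
Qed.

End PolyhedronBetweenBalls.

Theorem lemma5p3 (R : realType) (n d : nat) (eta : R) (s : 'I_n -> 'rV[R]_d)
  (A : 'M[R]_(n, d)) :
  0 <= eta -> eta <= 1 / 8 ->
  (forall i : 'I_n, on_sphere (s i)) ->
  eta_dense s eta ->
  (forall i : 'I_n, enorm (row i A - s i) <= eta) ->
  forall b : 'cV[R]_n, (forall i : 'I_n, 1 - eta <= b i 0 <= 1 + eta) ->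
  (forall x : 'rV[R]_d, in_scaled_ball (1 - 2 * eta) x -> in_polyhedron A b x) /\
  (forall x : 'rV[R]_d, in_polyhedron A b x -> in_scaled_ball (1 + 4 * eta) x).
Proof.
move=> eta_ge0 eta_le s1 dense rowA_near b b_near.
have rowA_le i : enorm (row i A) <= 1 + eta.
  rewrite -(subrK (s i) (row i A)) addrC; apply: le_trans (enormD _ _) _.
  by rewrite s1 lerD2l rowA_near.
have b_ge i : 1 - eta <= b i 0 by case/andP: (b_near i).
have b_le i : b i 0 <= 1 + eta by case/andP: (b_near i).
split=> x.
- rewrite in_scaled_ballP; last by lra.
  exact: ball_sub_polyhedron.
- rewrite in_scaled_ballP; last by lra.
  exact: (polyhedron_sub_ball eta_ge0 eta_le (dense_rows_dot_ge dense rowA_near) b_le).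
Qed.
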